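(* Let $K\ge 1$, $\alpha\in[K]=\{1,\dots,K\}$ and $F\in\mathbb{Z}^+$, and consider the coded caching problem with the symmetric $(K,\alpha,F)$ FDS structure, with $N=F\binom{K}{\alpha}\ge K$ files. Let $R^\star_{\mathrm{u},\mathrm{s}}(M)$ be the optimal worst-case communication load under uncoded and selfish cache placement when each user has a cache of $M$ files. Define $R_{\mathrm{LB}}(M)$ on $[0,\alpha N/K]$ as the piecewise linear function obtained by linear interpolation between the consecutive corner points $$\big(M,R_{\mathrm{LB}}\big)=\left(t\frac{N}{K},\ \frac{\binom{\alpha}{t+1}+(K-\alpha)\binom{\alpha-1}{t}}{\binom{\alpha}{t}}\right),\qquad t\in\{0,1,\dots,\alpha\}.$$ Then $R^\star_{\mathrm{u},\mathrm{s}}(M)\ge R_{\mathrm{LB}}(M)$ for all $M\in[0,\alpha N/K]$. Moreover, at each corner point, writing $\gamma=M/N=t/K$ and $\gamma_\alpha=K\gamma/\alpha$, the corner value equals $$R_{\mathrm{LB}}=\frac{K(1-\gamma_\alpha)}{K\gamma+1}\big[(K-\alpha)\gamma+1\big].$$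
   Context: Notation: $[n]=\{1,\dots,n\}$, $[a:b]=\{a,\dots,b\}$; $\binom{n}{k}=0$ whenever $n<0$, $k<0$ or $n<k$. Symmetric $(K,\alpha,F)$ FDS structure: the library consists of $N=F\binom{K}{\alpha}$ distinct files $W_{f,\mathcal S}$, indexed by $f\in[F]$ and $\mathcal S\subseteq[K]$ with $|\mathcal S|=\alpha$; the file class $\mathcal W_{\mathcal S}=\{W_{f,\mathcal S}:f\in[F]\}$ is of interest exactly to the users in $\mathcal S$. The file demand set (FDS) of user $k\in[K]$ is $\mathcal F_k=\{W_{f,\mathcal S}: f\in[F],\ |\mathcal S|=\alpha,\ k\in\mathcal S\}$. Caching model (centralized): a server stores the $N$ files, each consisting of $B$ independent uniformly random bits, and is connected to $K$ users by an error-free shared broadcast link; each user has a cache of $MB$ bits. In the placement phase the server fills the caches without knowing the future demands. In the delivery phase each user $k$ requests one file $W_{f_k,\mathcal D_k}\in\mathcal F_k$; the server then broadcasts a message, as a function of the library and the demands, from which each user must decode its requested file using its cache contents. A pair $(M,R)$ is achievable if there is a placement and delivery scheme such that, for every admissible demand (each user requesting a file in its own FDS), the number of transmitted bits is at most $RB$. The optimal worst-case load is $\inf\{R:(M,R)\text{ achievable}\}$. Uncoded and selfish placement: the cache of each user consists of plain copies of bits of the files (uncoded), and user $k$ may cache bits of a file $W_{f,\mathcal S}$ only if $W_{f,\mathcal S}\in\mathcal F_k$, i.e. only if $k\in\mathcal S$ (selfish). $R^\star_{\mathrm{u},\mathrm{s}}(M)$ is the optimal worst-case load when the placement is restricted to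 be uncoded and selfish. *)

From HB Require Import structures.
From mathcomp Require Import all_boot all_order all_algebra.
Set Implicit Arguments. Unset Strict Implicit. Unset Printing Implicit Defensive.
Import Order.TTheory GRing.Theory Num.Theory.
Local Open Scope ring_scope.

Definition fidx (K alpha F : nat) : finType :=
  {x : 'I_F * {set 'I_K} | #|x.2| == alpha}.

Definition interested K alpha F (k : 'I_K) (n : fidx K alpha F) : bool :=
  k \in (val n).2.

Definition nfiles (K alpha F : nat) : nat := (F * 'C(K, alpha))%N.

Definition library K alpha F (B : nat) := fidx K alpha F -> 'I_B -> bool.

Definition demand K alpha F := 'I_K -> fidx K alpha F.
Definition admissible K alpha F (d : demand K alpha F) : Prop :=
  forall k, interested k (d k).

(* Uncoded placement: user k stores the plain bits indexed by Z k.
   The cache content, as seen by user k, is the library restricted to Z k. *)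
Definition cache_content K alpha F B (Z : 'I_K -> {set (fidx K alpha F * 'I_B)})
  (k : 'I_K) (lib : library K alpha F B) : fidx K alpha F * 'I_B -> bool :=
  fun p => (p \in Z k) && lib p.1 p.2.

Definition achievable_us (R : realFieldType) (K alpha F : nat) (M Rt : R) : Prop :=
  exists (B L : nat) (Z : 'I_K -> {set (fidx K alpha F * 'I_B)})
    (enc : demand K alpha F -> library K alpha F B -> 'I_L -> bool)
    (dec : 'I_K -> demand K alpha F -> (fidx K alpha F * 'I_B -> bool) ->
           ('I_L -> bool) -> 'I_B -> bool),
    [/\ (0 < B)%N,
        (L%:R <= Rt * B%:R),
        (forall k, #|Z k|%:R <= M * B%:R),
        (forall k p, p \in Z k -> interested k p.1) &
        (forall d : demand K alpha F, admissible d ->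
           forall (lib : library K alpha F B) (k : 'I_K) (i : 'I_B),
             dec k d (cache_content Z k lib) (enc d lib) i = lib (d k) i)].

Definition RLB_corner (R : realFieldType) (K alpha t : nat) : R :=
  ('C(alpha, t.+1)%:R + (K - alpha)%:R * 'C(alpha.-1, t)%:R) / 'C(alpha, t)%:R.

Definition RLB_seg (R : realFieldType) (K alpha F t : nat) (M : R) : R :=
  let N := (nfiles K alpha F)%:R in
  @RLB_corner R K alpha t +
  (M - t%:R * N / K%:R) / (N / K%:R) *
  (@RLB_corner R K alpha t.+1 - @RLB_corner R K alpha t).

From HB Require Import structures.
From mathcomp Require Import all_boot all_order all_algebra all_fingroup zify ring lra.
From Stdlib Require Import FunctionalExtensionality.
Set Implicit Arguments. Unset Strict Implicit. Unset Printing Implicit Defensive.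
Import Order.TTheory GRing.Theory Num.Theory.

(* Average an acyclic index-coding bound over a symmetric family of demands.
   For a permutation [s] of the users and a shift [c], let user [s k] request
   the [(c + k)]-th file (mod [F]) of the class [s(W_k)], where [W_k] is the
   cyclic window of [alpha] users ending at [k].  Every bit of a requested
   file that no user at a later position caches must be recovered from the
   transmission, so there are at most [R B] such bits.  Summing over all
   [F K!] demands, a bit cached by [m] users is counted exactly
   [K! / C(K, alpha) * RLB_corner m] times, so the mean of [RLB_corner m]
   over the [N B] bits is at most [R].  The corner values are convex and
   nonincreasing in [m] and the mean of [m] is at most [K M / N], so Jensen's
   inequality gives [R >= R_LB(M)]. *)

Lemma sum_mem_card (I : finType) (A : {pred I}) : \sum_i (i \in A) = #|A|.
Proof. by rewrite -sum1_card [RHS]big_mkcond; apply: eq_bigr => i _; case: (i \in A). Qed.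

Section AcyclicBound.
Variables (I U : finType) (B L : nat).
Variables (Z : U -> {set I * 'I_B}) (d : U -> I) (r : U -> nat).
Variable enc : (I -> 'I_B -> bool) -> 'I_L -> bool.
Variable dec : U -> (I * 'I_B -> bool) -> ('I_L -> bool) -> 'I_B -> bool.
Hypothesis dec_correct : forall lib k i,
  dec k (fun p => (p \in Z k) && lib p.1 p.2) (enc lib) i = lib (d k) i.

Definition acyclic_bits : {set I * 'I_B} :=
  [set p | [exists j, (p.1 == d j) && [forall i, (r i <= r j) ==> (p \notin Z i)]]].

Definition lib_of_set (Y : {set I * 'I_B}) : I -> 'I_B -> bool := fun n b => (n, b) \in Y.

(* Users decode in increasing rank: the cached side information of user [j]
   on acyclic bits only concerns files of users of smaller rank, so two
   libraries supported on [acyclic_bits] with the same codeword coincide. *)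
Lemma enc_acyclic_inj :
  {in powerset acyclic_bits &, injective (fun Y => enc (lib_of_set Y))}.
Proof.
move=> Y1 Y2; rewrite !inE => sY1 sY2 eq_enc.
have outside p : p \notin acyclic_bits -> (p \in Y1) = (p \in Y2).
  move=> pS; have [pY1 pY2] := (contra (subsetP sY1 p) pS, contra (subsetP sY2 p) pS).
  by rewrite (negbTE pY1) (negbTE pY2).
have decoded n j : r j < n -> forall b, lib_of_set Y1 (d j) b = lib_of_set Y2 (d j) b.
  elim: n j => [//|n IHn] j; rewrite ltnS => ljn b.
  rewrite -!dec_correct eq_enc; congr dec.
  apply: functional_extensionality => p; case pZ: (p \in Z j) => //=.
  case pS: (p \in acyclic_bits); last by rewrite /lib_of_set -surjective_pairing outside ?pS.
  move: pS; rewrite inE => /existsP [j' /andP [/eqP p1 /forallP notZ]].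
  have lt_r : r j' < r j by rewrite ltnNge; apply: contraL pZ => le_r; have := notZ j; rewrite le_r.
  by have := IHn j' (leq_trans lt_r ljn) p.2; rewrite /lib_of_set -p1 -surjective_pairing.
apply/setP => p; case pS: (p \in acyclic_bits); last by rewrite outside ?pS.
move: pS; rewrite inE => /existsP [j /andP [/eqP p1 _]].
by have := decoded _ j (ltnSn _) p.2; rewrite /lib_of_set -p1 -surjective_pairing.
Qed.

Lemma card_acyclic_bits_le : #|acyclic_bits| <= L.
Proof.
pose code Y : {ffun 'I_L -> bool} := [ffun i => enc (lib_of_set Y) i].
have code_inj : {in powerset acyclic_bits &, injective code}.
  move=> Y1 Y2 sY1 sY2 /ffunP eq_code; apply: enc_acyclic_inj => //.
  by apply: functional_extensionality => i; have := eq_code i; rewrite !ffunE.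
rewrite -(@leq_exp2l 2) // -card_powerset -(card_in_imset code_inj).
by apply: leq_trans (max_card _) _; rewrite card_ffun card_bool card_ord.
Qed.
End AcyclicBound.

Section PermutationsOfSets.
Variable T : finType.
Implicit Types (s t : {perm T}) (A X Y U S : {set T}).

Lemma mem_imset_perm s A z : (z \in s @: A) = (s^-1%g z \in A).
Proof. by rewrite (can_imset_pre _ (permK s)) inE. Qed.

Lemma imset_permM s t A : (s * t)%g @: A = t @: (s @: A).
Proof. by rewrite -imset_comp; apply: eq_imset => x; rewrite permM. Qed.

Lemma card_imset_perm s A : #|s @: A| = #|A|.
Proof. exact/card_imset/perm_inj. Qed.

Lemma exists_perm_on_imset U X Y : X \subset U -> Y \subset U -> #|X| = #|Y| ->
  exists2 s, perm_on U s & s @: X = Y.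
Proof.
move: {2}#|X :\: Y| (erefl #|X :\: Y|) => n; elim: n X => [|n IHn] X cardXY sXU sYU cXY.
  exists 1%g; first exact: perm_on1.
  rewrite imset_perm1; apply/eqP; rewrite eqEcard cXY leqnn andbT.
  by rewrite -setD_eq0 -cards_eq0 cardXY.
have [x xXY] : exists x, x \in X :\: Y by apply/card_gt0P; rewrite cardXY.
have [y yYX] : exists y, y \in Y :\: X.
  apply/card_gt0P; have := cardsID Y X; have := cardsID X Y; rewrite setIC; lia.
move: (xXY) (yYX); rewrite !inE => /andP [xNY xX] /andP [yNX yY].
have onU : perm_on U (tperm x y).
  apply: subset_trans (tperm_on x y) _; apply/subsetP => z; rewrite !inE.
  by case/orP => /eqP ->; [apply: (subsetP sXU) | apply: (subsetP sYU)].
set X' := tperm x y @: X.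
have memX' z : (z \in X') = (tperm x y z \in X) by rewrite mem_imset_perm tpermV.
have cardX'Y : #|X' :\: Y| = n.
  have -> : X' :\: Y = (X :\: Y) :\ x.
    apply/setP => z; rewrite !inE memX'.
    case: tpermP => [->|->|/eqP zx /eqP zy]; first by rewrite eqxx (negbTE yNX) andbF.
      by rewrite yY andbF.
    by rewrite zx.
  by move: cardXY; rewrite (cardsD1 x (X :\: Y)) xXY; lia.
have sX'U : X' \subset U.
  by apply/subsetP => z; rewrite memX' -(perm_closed _ onU); apply: (subsetP sXU).
have [s onUs sX'Y] := IHn X' cardX'Y sX'U sYU (etrans (card_imset_perm _ _) cXY).
by exists (tperm x y * s)%g; [exact: perm_onM | rewrite imset_permM].
Qed.

Lemma exists_perm_imset2 A S (A' S' : {set T}) : S \subset A -> S' \subset A' ->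
  #|A| = #|A'| -> #|S| = #|S'| -> exists2 s : {perm T}, s @: A = A' & s @: S = S'.
Proof.
move=> sSA sS'A' cA cS.
have [s _ sAA'] := exists_perm_on_imset (subsetT A) (subsetT A') cA.
have sSA' : s @: S \subset A' by rewrite -sAA'; exact: imsetS.
have [t onA' tS] := exists_perm_on_imset sSA' sS'A' (etrans (card_imset_perm _ _) cS).
by exists (s * t)%g; rewrite imset_permM ?sAA' ?tS ?(im_perm_on onA').
Qed.

End PermutationsOfSets.

Section CountingPermutations.
Variable T : finType.
Implicit Types (X Y A S : {set T}) (a k : nat).

Lemma card_perm_type : #|{perm T}| = #|T|`!.
Proof. by rewrite -cardsT -card_perm; apply: eq_card => s; symmetry; apply/subsetP => x. Qed.

Definition perm_count X Y A S : nat :=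
  \sum_(s : {perm T}) ((s @: X == A) && [disjoint s @: Y & S]).

Definition flag a k A S : bool := [&& #|A| == a, S \subset A & #|S| == k].

Lemma perm_count_imset X Y A S (t : {perm T}) :
  perm_count X Y (t @: A) (t @: S) = perm_count X Y A S.
Proof.
rewrite /perm_count (reindex_inj (mulIg t)); apply: eq_bigr => s _.
by rewrite !imset_permM (imset_disjoint (@perm_inj _ t)) (inj_eq (imset_inj (@perm_inj _ t))).
Qed.

Lemma sum_flag_perm_count X Y k :
  \sum_A \sum_S flag #|X| k A S * perm_count X Y A S = #|T|`! * 'C(#|X :\: Y|, k).
Proof.
under eq_bigr => A _ do under eq_bigr => S _ do rewrite big_distrr /=.
under eq_bigr => A _ do rewrite exchange_big /=.
rewrite exchange_big -card_perm_type -sum_nat_const; apply: eq_bigr => s _.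
rewrite (bigD1 (s @: X)) //= [X in _ + X]big1 ?addn0; last first.
  by move=> A nXA; apply: big1 => S _; rewrite eq_sym (negbTE nXA) muln0.
have sXY : s @: (X :\: Y) = s @: X :\: s @: Y.
  by apply/setP => z; rewrite !inE !mem_imset_perm !inE.
rewrite eqxx -(card_imset_perm s (X :\: Y)) sXY -cards_draws -[RHS]sum_mem_card.
apply: eq_bigr => S _; rewrite /flag card_imset_perm eqxx inE subsetD disjoint_sym.
by case: (S \subset _); case: [disjoint _ & _]; case: (_ == k).
Qed.

Lemma sum_flag a k : \sum_A \sum_S flag a k A S = 'C(#|T|, a) * 'C(a, k).
Proof.
transitivity (\sum_A (A \in [set A : {set T} | #|A| == a]) * 'C(a, k)).
  apply: eq_bigr => A _; rewrite inE /flag.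
  have [<-|_] := eqVneq #|A| a; last by apply: big1.
  rewrite mul1n -cards_draws -sum_mem_card; apply: eq_bigr => S _.
  by rewrite inE.
by rewrite -big_distrl sum_mem_card card_draws.
Qed.

(* All flags of a given shape lie in one orbit, so [perm_count] is constant on
   them and its value is read off from the two sums above. *)
Lemma perm_count_flag X Y A S k : flag #|X| k A S ->
  perm_count X Y A S * ('C(#|T|, #|X|) * 'C(#|X|, k)) = #|T|`! * 'C(#|X :\: Y|, k).
Proof.
move=> flagAS; rewrite -sum_flag_perm_count -sum_flag big_distrr.
apply: eq_bigr => A' _; rewrite big_distrr; apply: eq_bigr => S' _.
have [flagAS'|_] := boolP (flag #|X| k A' S'); rewrite /=; last by rewrite muln0.
move: flagAS flagAS' => /and3P [/eqP cA sSA /eqP cS] /and3P [/eqP cA' sSA' /eqP cS'].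
have [t <- <-] := exists_perm_imset2 sSA sSA' (etrans cA (esym cA')) (etrans cS (esym cS')).
by rewrite perm_count_imset muln1 mul1n.
Qed.

End CountingPermutations.

Section Windows.
Variables (K alpha : nat).
Hypotheses (alpha_gt0 : 0 < alpha) (alpha_leK : alpha <= K).
Implicit Types (j k : 'I_K).

(* The cyclic interval [k - alpha + 1, k] of users, taken mod [K]. *)
Definition window k : {set 'I_K} :=
  [set j : 'I_K | (j <= k < j + alpha) || (k + K < j + alpha)].

Definition upper k : {set 'I_K} := [set j : 'I_K | k <= j].

Lemma card_ord_pred n (P : pred nat) : #|[set j : 'I_n | P j]| = \sum_(0 <= j < n) P j.
Proof. by rewrite big_mkord -sum_mem_card; apply: eq_bigr => j _; rewrite inE. Qed.

Lemma card_window k : #|window k| = alpha.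
Proof.
rewrite (card_ord_pred _ (fun j : nat => (j <= k < j + alpha) || (k + K < j + alpha))).
have -> : forall n, \sum_(0 <= j < n) ((j <= k < j + alpha) || (k + K < j + alpha))
   = (minn n k.+1 - (k.+1 - alpha)) + (n - (k + K - alpha).+1).
  by elim=> [|n IHn]; [rewrite big_geq | rewrite big_nat_recr //= IHn; lia].
have := ltn_ord k; lia.
Qed.

Lemma card_window_upper k : #|window k :\: upper k| = minn k alpha.-1.
Proof.
have -> : window k :\: upper k = [set j : 'I_K | j < k < j + alpha].
  by apply/setP => j; rewrite !inE; have := ltn_ord j; have := ltn_ord k; lia.
rewrite (card_ord_pred _ (fun j : nat => j < k < j + alpha)).
have -> : forall n, \sum_(0 <= j < n) (j < k < j + alpha) = minn n k - (k.+1 - alpha).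
  by elim=> [|n IHn]; [rewrite big_geq //; lia | rewrite big_nat_recr //= IHn; lia].
have := ltn_ord k; lia.
Qed.

Lemma window_self k : k \in window k.
Proof. by rewrite inE leqnn /=; lia. Qed.

Lemma window_inj : alpha < K -> injective window.
Proof.
move=> alpha_ltK; suff lt_neq j k : j < k -> window j != window k.
  by move=> j k eq_w; case: (ltngtP j k) => [/lt_neq|/lt_neq|/val_inj //]; rewrite eq_w eqxx.
move=> ltjk; apply/eqP => eq_w.
have j1_ltK : j.+1 < K by apply: leq_trans (ltn_ord k).
have : Ordinal j1_ltK \in window j.
  have : j \in window k by rewrite -eq_w window_self.
  by rewrite eq_w !inE /=; have := ltn_ord k; lia.
by rewrite inE /=; lia.
Qed.

End Windows.

Lemma sum_binomial n k : \sum_(0 <= j < n) 'C(j, k) = 'C(n, k.+1).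
Proof. by elim: n => [|n IHn]; [rewrite big_geq | rewrite big_nat_recr //= IHn binS]. Qed.

Lemma sum_binomial_minn K alpha k : 0 < alpha -> alpha <= K ->
  \sum_(0 <= j < K) 'C(minn j alpha.-1, k) = 'C(alpha, k.+1) + (K - alpha) * 'C(alpha.-1, k).
Proof.
move=> alpha_gt0 /subnKC {1}<-; elim: (K - alpha) => [|i IHi].
  rewrite addn0 mul0n addn0 -sum_binomial.
  by apply: eq_big_nat => j /andP [_ lt_j]; congr 'C(_, _); lia.
by rewrite addnS big_nat_recr //= IHi (_ : minn _ _ = alpha.-1) ?mulSn; lia.
Qed.

Lemma exists_uniq_sum (I : finType) (P : pred I) :
  {in P &, forall i j, i = j} -> [exists i, P i] = \sum_i P i :> nat.
Proof.
move=> P_uniq; case: (pickP P) => [i Pi | P0]; last first.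
  have -> : [exists i, P i] = false by apply/existsP => -[i]; rewrite P0.
  by rewrite big1 // => i _; rewrite P0.
have -> : [exists i, P i] by apply/existsP; exists i.
rewrite (bigD1 i) //= Pi big1 // => j neq_ji.
by case Pj: (P j); rewrite // (P_uniq _ _ Pj Pi) eqxx in neq_ji.
Qed.

Lemma card_fidx K alpha F : #|fidx K alpha F| = nfiles K alpha F.
Proof.
rewrite card_sig /nfiles.
transitivity #|setX [set: 'I_F] [set A : {set 'I_K} | #|A| == alpha]|.
  by apply: eq_card => -[f A]; rewrite !inE.
by rewrite cardsX cardsT card_ord card_draws card_ord.
Qed.

Section PermutationDemands.
Variables (K alpha F : nat).
Hypotheses (alpha_gt0 : 0 < alpha) (alpha_leK : alpha <= K).
(* When [alpha = K] all windows are equal and only the shifts tell the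
   requested files apart. *)
Hypothesis enough_files : alpha = K -> K <= F.
Local Notation FI := (fidx K alpha F).
Implicit Types (c : 'I_F) (s : {perm 'I_K}) (k : 'I_K).

Definition shift c (k : nat) : 'I_F :=
  Ordinal (ltn_pmod (c + k) (leq_ltn_trans (leq0n c) (ltn_ord c))).

Lemma sum_shift_eq k f : \sum_c (shift c k == f) = 1.
Proof.
have shift_inj : injective (shift^~ k).
  move=> c1 c2 /(congr1 val) /= /eqP; rewrite eqn_modDr !modn_small //.
  by move/eqP/val_inj.
transitivity (\sum_c (c == f : nat)).
  exact: esym (reindex_inj shift_inj (F := fun c => nat_of_bool (c == f))).
by rewrite (bigD1 f) //= eqxx big1 // => c /negbTE ->.
Qed.

Definition window_pair c s k : 'I_F * {set 'I_K} := (shift c k, s @: window alpha k).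

Lemma window_pair_inj c s : injective (window_pair c s).
Proof.
move=> k1 k2 [eq_shift eq_w].
have [alpha_ltK|alpha_geK] := ltnP alpha K.
  exact: (window_inj alpha_gt0 alpha_leK alpha_ltK (imset_inj (@perm_inj _ s) eq_w)).
have K_leF : K <= F by apply: enough_files; apply/eqP; rewrite eqn_leq alpha_leK.
have lt_kF k : k < F by apply: leq_trans (ltn_ord k) K_leF.
by apply/val_inj/eqP; move/eqP: eq_shift; rewrite eqn_modDl !modn_small.
Qed.

Lemma card_imset_window s k : #|s @: window alpha k| == alpha.
Proof. by rewrite card_imset_perm card_window. Qed.

Definition window_file c s k : FI := exist _ (window_pair c s k) (card_imset_window s k).

(* User [s k] sits at position [k] and requests the [k]-th window file. *)
Definition perm_demand c s : demand K alpha F := fun j => window_file c s (s^-1%g j).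

Lemma perm_demand_admissible c s : admissible (perm_demand c s).
Proof. by move=> j; rewrite /interested /= mem_imset_perm window_self. Qed.

Definition perm_rank s (j : 'I_K) : nat := K - s^-1%g j.

Section Placement.
Variables (B : nat) (Z : 'I_K -> {set FI * 'I_B}).
Hypothesis Z_selfish : forall k p, p \in Z k -> interested k p.1.
Implicit Types (p : FI * 'I_B).

Definition cachers p : {set 'I_K} := [set k | p \in Z k].

Lemma cachers_sub p : cachers p \subset (val p.1).2.
Proof. by apply/subsetP => k; rewrite inE => /Z_selfish. Qed.

Lemma card_cachers_le p : #|cachers p| <= alpha.
Proof. by rewrite -(eqP (valP p.1)) subset_leq_card // cachers_sub. Qed.

Lemma sum_card_cachers : \sum_p #|cachers p| = \sum_k #|Z k|.
Proof.
under eq_bigr => p _ do rewrite -sum_mem_card.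
rewrite exchange_big; apply: eq_bigr => k _.
by rewrite -sum_mem_card; apply: eq_bigr => p _; rewrite inE.
Qed.

Definition perm_acyclic_bits c s := acyclic_bits Z (perm_demand c s) (perm_rank s).

Lemma mem_perm_acyclic_bits c s p : (p \in perm_acyclic_bits c s) =
  [exists k, (val p.1 == window_pair c s k) && [disjoint s @: upper k & cachers p]].
Proof.
rewrite inE; apply/existsP/existsP => [[j /andP [/eqP p1 notZ]] | [k /andP [p1 disj]]].
  exists (s^-1%g j); rewrite p1 eqxx disjoint_subset; apply/subsetP => i.
  rewrite mem_imset_perm !inE => le_ij; apply: (implyP (forallP notZ i)).
  by rewrite /perm_rank; have := ltn_ord (s^-1%g i); lia.
exists (s k); rewrite /perm_demand permK -val_eqE p1; apply/forallP => i; apply/implyP => le_r.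
apply: contraTN disj => pZ; apply/pred0Pn; exists i; rewrite /= mem_imset_perm !inE pZ andbT.
by move: le_r; rewrite /perm_rank permK leq_sub2lE // ltnW.
Qed.

Definition multiplicity p : nat :=
  \sum_c \sum_s [exists k, (val p.1 == window_pair c s k) && [disjoint s @: upper k & cachers p]].

Lemma multiplicityE p :
  multiplicity p = \sum_k perm_count (window alpha k) (upper k) (val p.1).2 (cachers p).
Proof.
rewrite /multiplicity.
under eq_bigr => c _ do under eq_bigr => s _ do
  (rewrite exists_uniq_sum; last by move=> k1 k2 /andP [/eqP -> _] /andP [/eqP /window_pair_inj]).
under eq_bigr => c _ do rewrite exchange_big /=.
rewrite exchange_big /=; apply: eq_bigr => k _.
rewrite /perm_count -[RHS]mul1n -(sum_shift_eq k (val p.1).1) big_distrl /=.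
apply: eq_bigr => c _; rewrite big_distrr /=; apply: eq_bigr => s _.
rewrite [val p.1]surjective_pairing xpair_eqE.
rewrite ![_ == (val p.1).1]eq_sym ![_ == (val p.1).2]eq_sym.
by case: (_ == _); case: (_ == _); case: [disjoint _ & _].
Qed.

Lemma multiplicity_binomial p :
  multiplicity p * ('C(K, alpha) * 'C(alpha, #|cachers p|)) =
  K`! * ('C(alpha, #|cachers p|.+1) + (K - alpha) * 'C(alpha.-1, #|cachers p|)).
Proof.
rewrite multiplicityE big_distrl -(sum_binomial_minn _ alpha_gt0 alpha_leK) big_mkord big_distrr.
apply: eq_bigr => k _.
have flag_p : flag #|window alpha k| #|cachers p| (val p.1).2 (cachers p).
  by rewrite /flag card_window // (valP p.1) cachers_sub eqxx.
by have := perm_count_flag (upper k) flag_p; rewrite card_window // card_ord card_window_upper.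
Qed.

Lemma sum_multiplicity_le L (enc : demand K alpha F -> library K alpha F B -> 'I_L -> bool)
    (dec : 'I_K -> demand K alpha F -> (FI * 'I_B -> bool) -> ('I_L -> bool) -> 'I_B -> bool) :
  (forall d, admissible d -> forall lib k i,
     dec k d (cache_content Z k lib) (enc d lib) i = lib (d k) i) ->
  \sum_p multiplicity p <= F * K`! * L.
Proof.
move=> dec_ok; apply: (@leq_trans (\sum_(c : 'I_F) \sum_(s : {perm 'I_K}) L)); last first.
  by rewrite !sum_nat_const card_perm_type !card_ord mulnA.
rewrite exchange_big; apply: leq_sum => c _; rewrite exchange_big; apply: leq_sum => s _.
under eq_bigr => p _ do rewrite -mem_perm_acyclic_bits.
rewrite sum_mem_card; apply: (@card_acyclic_bits_le _ _ _ _ _ _ _ (enc _) (fun k => dec k _)).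
exact: dec_ok (perm_demand_admissible c s).
Qed.

End Placement.
End PermutationDemands.

Local Open Scope ring_scope.

Section CornerPoints.
Variables (R : realFieldType) (K alpha : nat).
Hypothesis alpha_gt0 : (0 < alpha)%N.
Local Notation corner := (@RLB_corner R K alpha).

Lemma RLB_cornerE s : (s <= alpha)%N ->
  corner s = (alpha%:R - s%:R) / (s%:R + 1) + (K - alpha)%:R * (alpha%:R - s%:R) / alpha%:R.
Proof.
move=> le_s; rewrite /RLB_corner.
have nz_Cas : 'C(alpha, s)%:R != 0 :> R by rewrite pnatr_eq0 -lt0n bin_gt0.
have nz_s1 : s%:R + 1 != 0 :> R by rewrite natr1 pnatr_eq0.
have nz_a : alpha%:R != 0 :> R by rewrite pnatr_eq0 -lt0n.
have -> : 'C(alpha, s.+1)%:R = (alpha%:R - s%:R) * 'C(alpha, s)%:R / (s%:R + 1) :> R.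
  apply: (mulIf nz_s1); rewrite mulfVK // natr1 -natrB // -!natrM.
  by rewrite mulnC mul_bin_left.
have -> : 'C(alpha.-1, s)%:R = (alpha%:R - s%:R) * 'C(alpha, s)%:R / alpha%:R :> R.
  by apply: (mulIf nz_a); rewrite mulfVK // -natrB // -!natrM mulnC mul_bin_down.
by field; rewrite nz_Cas nz_s1 nz_a.
Qed.

(* [s |-> corner s] is the restriction to integers of a convex function, so it
   lies above the secant through two consecutive integers. *)
Lemma RLB_corner_secant s t : (s <= alpha)%N -> (t < alpha)%N ->
  corner t + (s%:R - t%:R) * (corner t.+1 - corner t) <= corner s.
Proof.
move=> le_s lt_t; rewrite (RLB_cornerE le_s) (RLB_cornerE lt_t) (RLB_cornerE (ltnW lt_t)) -natr1.
set a : R := alpha%:R; set x : R := s%:R; set y : R := t%:R; set c : R := (K - alpha)%:R.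
have [x_ge0 y_ge0 a_gt0] : [/\ 0 <= x, 0 <= y & 0 < a] by rewrite !ler0n ltr0n.
have key : 0 <= (y - x) * (y - x + 1).
  have [le_st|lt_ts] := leqP s t.
    have le_xy : x <= y by rewrite ler_nat.
    by apply: mulr_ge0; lra.
  have le_yx : y + 1 <= x by rewrite natr1 ler_nat.
  by apply: mulr_le0; lra.
rewrite -subr_ge0.
have -> : (a - x) / (x + 1) + c * (a - x) / a -
  ((a - y) / (y + 1) + c * (a - y) / a +
   (x - y) * ((a - (y + 1)) / (y + 1 + 1) + c * (a - (y + 1)) / a -
              ((a - y) / (y + 1) + c * (a - y) / a)))
  = (a + 1) * ((y - x) * (y - x + 1)) / ((x + 1) * (y + 1) * (y + 2)).
  by field; apply/and4P; split; apply: lt0r_neq0; lra.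
by apply: divr_ge0; [apply: mulr_ge0 | apply: mulr_ge0; [apply: mulr_ge0|]]; lra.
Qed.

Lemma RLB_corner_succ_le t : (t < alpha)%N -> corner t.+1 <= corner t.
Proof.
move=> lt_t; rewrite (RLB_cornerE lt_t) (RLB_cornerE (ltnW lt_t)) -natr1.
set a : R := alpha%:R; set y : R := t%:R; set c : R := (K - alpha)%:R.
have [y_ge0 c_ge0 a_gt0] : [/\ 0 <= y, 0 <= c & 0 < a] by rewrite !ler0n ltr0n.
rewrite -subr_ge0.
have -> : (a - y) / (y + 1) + c * (a - y) / a -
    ((a - (y + 1)) / (y + 1 + 1) + c * (a - (y + 1)) / a)
  = (a + 1) / ((y + 1) * (y + 2)) + c / a.
  by field; apply/and3P; split; apply: lt0r_neq0; lra.
have den_ge0 : 0 <= (y + 1) * (y + 2) by apply: mulr_ge0; lra.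
by apply: addr_ge0; apply: divr_ge0 => //; lra.
Qed.

Lemma RLB_corner_gammaE t : (0 < K)%N -> (alpha <= K)%N -> (t <= alpha)%N ->
  corner t = K%:R * (1 - K%:R * (t%:R / K%:R) / alpha%:R) / (K%:R * (t%:R / K%:R) + 1) *
             ((K - alpha)%:R * (t%:R / K%:R) + 1).
Proof.
move=> K_gt0 alpha_leK le_t; rewrite RLB_cornerE // natrB //.
have [K_gt0R a_gt0R t_ge0R] : [/\ 0 < K%:R :> R, 0 < alpha%:R :> R & 0 <= t%:R :> R].
  by rewrite !ltr0n ler0n.
by field; apply/and3P; split; apply: lt0r_neq0; lra.
Qed.

(* Jensen's inequality for the secant of [RLB_corner_secant]: the slope is
   nonpositive, so an upper bound on the mean of the weights suffices. *)
Lemma secant_le_of_mean (I : finType) (w : I -> nat) (x Rt : R) t :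
  (t < alpha)%N -> (0 < #|I|)%N -> (forall i, w i <= alpha)%N ->
  \sum_i corner (w i) <= #|I|%:R * Rt -> (\sum_i w i)%:R <= #|I|%:R * x ->
  corner t + (x - t%:R) * (corner t.+1 - corner t) <= Rt.
Proof.
move=> lt_t I_gt0 w_le sum_corner sum_w.
set n : R := #|I|%:R; set D := corner t.+1 - corner t.
have n_gt0 : 0 < n by rewrite ltr0n.
have D_le0 : D <= 0 by rewrite subr_le0 RLB_corner_succ_le.
have secant : \sum_i (corner t + ((w i)%:R - t%:R) * D) <= \sum_i corner (w i).
  by apply: ler_sum => i _; apply: RLB_corner_secant.
have sum_secantE : \sum_i (corner t + ((w i)%:R - t%:R) * D) =
    n * (corner t - t%:R * D) + D * (\sum_i w i)%:R.
  rewrite natr_sum mulr_sumr /n mulr_natl -sumr_const -big_split /=.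
  by apply: eq_bigr => i _; ring.
rewrite -(ler_pM2l n_gt0); apply: le_trans (le_trans secant sum_corner).
have -> : n * (corner t + (x - t%:R) * D) = n * (corner t - t%:R * D) + D * (n * x) by ring.
by rewrite sum_secantE lerD2l ler_wnM2l.
Qed.
End CornerPoints.

Lemma RLB_segE (R : realFieldType) K alpha F t (M : R) :
  (0 < K)%N -> (0 < nfiles K alpha F)%N ->
  RLB_seg K alpha F t M =
    RLB_corner R K alpha t + (K%:R * M / (nfiles K alpha F)%:R - t%:R) *
                             (RLB_corner R K alpha t.+1 - RLB_corner R K alpha t).
Proof.
move=> K_gt0 N_gt0; rewrite /RLB_seg; field.
by rewrite !pnatr_eq0 -!lt0n K_gt0 N_gt0.
Qed.

Section CornerAverage.
Variables (R : realFieldType) (K alpha F B L : nat).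
Hypotheses (alpha_gt0 : (0 < alpha)%N) (alpha_leK : (alpha <= K)%N).
Hypothesis enough_files : alpha = K -> (K <= F)%N.
Variable Z : 'I_K -> {set fidx K alpha F * 'I_B}.
Hypothesis Z_selfish : forall k p, p \in Z k -> interested k p.1.
Local Notation corner := (@RLB_corner R K alpha).

Lemma multiplicity_corner p :
  (multiplicity Z p)%:R * 'C(K, alpha)%:R = K`!%:R * corner #|cachers Z p|.
Proof.
have nz_C : 'C(alpha, #|cachers Z p|)%:R != 0 :> R.
  by rewrite pnatr_eq0 -lt0n bin_gt0 card_cachers_le.
apply: (mulIf nz_C); rewrite /RLB_corner mulrA mulfVK // -mulrA -!natrM.
by rewrite (multiplicity_binomial alpha_gt0 alpha_leK enough_files Z_selfish) natrM natrD !natrM.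
Qed.

Lemma sum_corner_cachers_le (enc : demand K alpha F -> library K alpha F B -> 'I_L -> bool)
    (dec : 'I_K -> demand K alpha F -> (fidx K alpha F * 'I_B -> bool) ->
           ('I_L -> bool) -> 'I_B -> bool) (Rt : R) :
  (forall d, admissible d -> forall lib k i,
     dec k d (cache_content Z k lib) (enc d lib) i = lib (d k) i) ->
  L%:R <= Rt * B%:R ->
  \sum_p corner #|cachers Z p| <= #|{: fidx K alpha F * 'I_B}|%:R * Rt.
Proof.
move=> dec_ok L_le.
have fact_gt0 : 0 < K`!%:R :> R by rewrite ltr0n fact_gt0.
have C_gt0 : 0 < 'C(K, alpha)%:R :> R by rewrite ltr0n bin_gt0.
rewrite -(ler_pM2l fact_gt0) mulr_sumr.
under eq_bigr => p _ do rewrite -multiplicity_corner.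
rewrite -mulr_suml -natr_sum card_prod card_fidx card_ord /nfiles.
apply: (@le_trans _ _ ((F * K`! * L)%:R * 'C(K, alpha)%:R)).
  by rewrite ler_pM2r // ler_nat (sum_multiplicity_le alpha_gt0 alpha_leK enough_files dec_ok).
rewrite !natrM; set KFC : R := K`!%:R * (F%:R * 'C(K, alpha)%:R).
have [-> ->] : F%:R * K`!%:R * L%:R * 'C(K, alpha)%:R = KFC * L%:R /\
    K`!%:R * (F%:R * 'C(K, alpha)%:R * B%:R * Rt) = KFC * (Rt * B%:R).
  by split; rewrite /KFC; ring.
by rewrite ler_wpM2l // /KFC mulr_ge0 ?mulr_ge0 ?ler0n.
Qed.
Lemma sum_cachers_le (M : R) : (0 < nfiles K alpha F)%N ->
  (forall k, #|Z k|%:R <= M * B%:R) ->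
  (\sum_p #|cachers Z p|)%:R <=
    #|{: fidx K alpha F * 'I_B}|%:R * (K%:R * M / (nfiles K alpha F)%:R).
Proof.
move=> N_gt0 Z_le; rewrite sum_card_cachers natr_sum card_prod card_fidx card_ord.
apply: le_trans (ler_sum _ (fun k _ => Z_le k)) _.
rewrite sumr_const card_ord -mulr_natl natrM le_eqVlt; apply/orP; left; apply/eqP.
by field; rewrite pnatr_eq0 -lt0n.
Qed.

End CornerAverage.

Theorem theorem1 (R : realFieldType) (K alpha F : nat) :
  (1 <= K)%N -> (1 <= alpha <= K)%N -> (1 <= F)%N ->
  (K <= nfiles K alpha F)%N ->
  (forall M Rt : R,
     0 <= M <= alpha%:R * (nfiles K alpha F)%:R / K%:R ->
     @achievable_us R K alpha F M Rt ->
     forall t : nat, (t < alpha)%N ->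
       t%:R * (nfiles K alpha F)%:R / K%:R <= M <=
         t.+1%:R * (nfiles K alpha F)%:R / K%:R ->
       @RLB_seg R K alpha F t M <= Rt)
  /\
  (forall t : nat, (t <= alpha)%N ->
     let gamma : R := t%:R / K%:R in
     let gamma_a : R := K%:R * gamma / alpha%:R in
     @RLB_corner R K alpha t =
       K%:R * (1 - gamma_a) / (K%:R * gamma + 1) *
       ((K - alpha)%:R * gamma + 1)).
Proof.
move=> K_gt0 /andP [alpha_gt0 alpha_leK] _ K_leN; split; last first.
  by move=> t le_t /=; exact: RLB_corner_gammaE.
move=> M Rt _ [B [L [Z [enc [dec [B_gt0 L_le Z_le Z_selfish dec_ok]]]]]] t lt_t _.
have enough_files : alpha = K -> (K <= F)%N.
  by move=> eq_aK; move: K_leN; rewrite /nfiles eq_aK binn muln1.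
have N_gt0 : (0 < nfiles K alpha F)%N := leq_trans K_gt0 K_leN.
rewrite RLB_segE //.
apply: (@secant_le_of_mean R K alpha alpha_gt0 _ (fun p => #|cachers Z p|)) => //.
- by rewrite card_prod card_fidx card_ord muln_gt0 N_gt0.
- exact: card_cachers_le.
- exact: sum_corner_cachers_le dec_ok L_le.
- exact: sum_cachers_le.
Qed.
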